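(* Let $\mathcal G$ be a synchronous game. The assignment $p^i_a\mapsto\frac12(1-z^i_a)$ extends to a unital $*$-isomorphism from the synchronous algebra $\mathcal A(\mathcal G)$ onto the SynchBCS algebra $\mathscr B(\mathcal G)$, whose inverse is determined by $z^i_a\mapsto 1-2p^i_a$.
   Context: A synchronous game has finite input set $I$ (for both players), output set $A$ (for both players) and predicate $V:A\times A\times I\times I\to\{0,1\}$ with $V(a,b|i,i)=0$ whenever $a\neq b$. The synchronous algebra $\mathcal A(\mathcal G)$ is the universal unital complex $*$-algebra with generators $p^i_a$, $(i,a)\in I\times A$, and relations $(p^i_a)^2=p^i_a=(p^i_a)^*$; $\sum_{a\in A}p^i_a=1$ for each $i$; $p^i_ap^j_b=0$ whenever $V(a,b|i,j)=0$. The SynchBCS algebra $\mathscr B(\mathcal G)$ is the universal unital complex $*$-algebra with generators $z^i_a$, $(i,a)\in I\times A$, and relations: $z^i_a=(z^i_a)^*$; $(z^i_a)^2=1$; $\frac12(1+z^i_a+z^j_b-z^i_az^j_b)=1$ whenever $V(a,b|i,j)=0$; $\prod_{a\in A}z^i_a=-1$ for each $i$ (product in a fixed order of $A$); $z^i_az^i_{a'}=z^i_{a'}z^i_a$ for all $a,a'\in A$. *)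

From HB Require Import structures.
From mathcomp Require Import all_boot all_order all_algebra all_field.
Set Implicit Arguments. Unset Strict Implicit. Unset Printing Implicit Defensive.
Import Order.TTheory GRing.Theory Num.Theory.
Local Open Scope ring_scope.

(* A unital complex *-algebra.  The underlying ring is a pzRingType, so the
   zero algebra (1 = 0) is allowed, as it must be for universal algebras. *)
Record starAlg := StarAlg {
  sa_car :> pzRingType;
  sa_scale : algC -> sa_car -> sa_car;
  sa_scale1 : forall x, sa_scale 1 x = x;
  sa_scaleA : forall a b x, sa_scale a (sa_scale b x) = sa_scale (a * b) x;
  sa_scaleDr : forall a x y, sa_scale a (x + y) = sa_scale a x + sa_scale a y;
  sa_scaleDl : forall a b x, sa_scale (a + b) x = sa_scale a x + sa_scale b x;
  sa_scaleAl : forall a x y, sa_scale a (x * y) = sa_scale a x * y;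
  sa_scaleAr : forall a x y, sa_scale a (x * y) = x * sa_scale a y;
  sa_star : sa_car -> sa_car;
  sa_starK : involutive sa_star;
  sa_starD : forall x y, sa_star (x + y) = sa_star x + sa_star y;
  sa_starM : forall x y, sa_star (x * y) = sa_star y * sa_star x;
  sa_starZ : forall a x, sa_star (sa_scale a x) = sa_scale (a^*)%C (sa_star x)
}.

Definition is_star_hom (S T : starAlg) (f : S -> T) : Prop :=
  [/\ forall x y, f (x + y) = f x + f y,
      forall a x, f (sa_scale a x) = sa_scale a (f x),
      forall x y, f (x * y) = f x * f y,
      f 1 = 1 &
      forall x, f (sa_star x) = sa_star (f x)].

Definition is_universal (I A : Type)
    (rel : forall B : starAlg, (I -> A -> B) -> Prop)
    (U : starAlg) (g : I -> A -> U) : Prop :=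
  rel U g /\
  forall (B : starAlg) (h : I -> A -> B), rel B h ->
    exists f : U -> B,
      [/\ is_star_hom f, (forall i a, f (g i a) = h i a) &
          forall f' : U -> B, is_star_hom f' -> (forall i a, f' (g i a) = h i a) ->
            forall x, f' x = f x].

(* synchronous game: predicate V a b i j = V(a,b|i,j) *)
Definition synchronous (I A : finType) (V : A -> A -> I -> I -> bool) : Prop :=
  forall i a b, a != b -> V a b i i = false.

Definition sync_rel (I A : finType) (V : A -> A -> I -> I -> bool)
    (B : starAlg) (p : I -> A -> B) : Prop :=
  [/\ forall i a, p i a * p i a = p i a,
      forall i a, sa_star (p i a) = p i a,
      forall i, \sum_(a : A) p i a = 1 &
      forall i j a b, V a b i j = false -> p i a * p j b = 0].

(* defining relations of the SynchBCS algebra B(G); the product over A is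
   taken in the fixed enumeration order of the finType A *)
Definition bcs_rel (I A : finType) (V : A -> A -> I -> I -> bool)
    (B : starAlg) (z : I -> A -> B) : Prop :=
  [/\ forall i a, sa_star (z i a) = z i a,
      forall i a, z i a * z i a = 1,
      forall i j a b, V a b i j = false ->
        sa_scale (2%:R^-1) (1 + z i a + z j b - z i a * z j b) = 1,
      forall i, \prod_(a : A) z i a = -1 &
      forall i a a', z i a * z i a' = z i a' * z i a].

(* The substitution p = (1 - z)/2, z = 1 - 2p is a bijection between
   self-adjoint idempotents and self-adjoint symmetries.  Under it,
   orthogonality p q = 0 becomes the BCS relation (1 + z + w - z w)/2 = 1, a
   partition of unity by pairwise orthogonal projections becomes a commuting
   family of symmetries with product -1, and the two presentations therefore
   have the same representations.  The two induced homomorphisms are mutually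
   inverse on generators, hence inverse to each other by the uniqueness part
   of the universal properties. *)
From HB Require Import structures.
From mathcomp Require Import all_boot all_order all_algebra all_field.
Import GRing.Theory Num.Theory.
Set Implicit Arguments.
Unset Strict Implicit.
Unset Printing Implicit Defensive.
Local Open Scope ring_scope.

Section Reflections.
Variable R : pzRingType.
Implicit Types x y : R.

Lemma mulr_reflections x y :
  (1 - x *+ 2) * (1 - y *+ 2) = 1 - x *+ 2 - y *+ 2 + (x * y) *+ 4.
Proof.
rewrite mulrBl mul1r mulrBr mulr1 mulrnAl mulrnAr -mulrnA opprB addrA addrAC.
by rewrite [1 - y *+ 2 - _]addrAC.
Qed.

Lemma reflection_sqr x : x * x = x -> (1 - x *+ 2) * (1 - x *+ 2) = 1.
Proof.
by move=> xx; rewrite mulr_reflections xx -[4%N]/(2 + 2)%N mulrnDr addrA !subrK.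
Qed.

Lemma bcs_reflections x y :
  1 + (1 - x *+ 2) + (1 - y *+ 2) - (1 - x *+ 2) * (1 - y *+ 2)
    = (1 - (x * y) *+ 2) *+ 2.
Proof.
rewrite mulr_reflections mulrnBl -mulrnA -[(2 * 2)%N]/4%N.
move: (x *+ 2) (y *+ 2) ((x * y) *+ 4) => u v w.
rewrite !opprD !opprK !addrA [1 *+ 2]mulr2n; congr (_ - _).
by rewrite [_ - v - 1]addrAC addrK [_ - v + u]addrAC !subrK.
Qed.

Lemma commr_reflections x y :
  GRing.comm x y -> GRing.comm (1 - x *+ 2) (1 - y *+ 2).
Proof.
move=> cxy; apply: commrB; first exact: commr1.
apply/commrMn/commr_sym/commrB; first exact: commr1.
exact/commrMn/commr_sym.
Qed.

Lemma prod_reflections (T : eqType) (F : T -> R) (r : seq T) :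
  uniq r -> {in r &, forall a b, a != b -> F a * F b = 0} ->
  \prod_(a <- r) (1 - F a *+ 2) = 1 - (\sum_(a <- r) F a) *+ 2.
Proof.
elim: r => [|x r IH] /=; first by rewrite !big_nil mul0rn subr0.
move=> /andP[xr ur] orth.
have orth_r : {in r &, forall a b, a != b -> F a * F b = 0}.
  by move=> a b ar br; apply: orth; rewrite inE ?ar ?br orbT.
rewrite !big_cons IH // mulr_reflections.
have -> : F x * \sum_(a <- r) F a = 0.
  rewrite mulr_sumr big1_seq // => a /= ar.
  apply: orth; rewrite ?inE ?eqxx ?ar ?orbT //.
  by apply: contraNneq xr => ->.
by rewrite mul0rn addr0 -addrA -opprD -mulrnDl.
Qed.

Hypothesis mulr2n_inj : injective (fun x : R => x *+ 2).

Lemma mulr2n_eq0 x : x *+ 2 = 0 -> x = 0.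
Proof. by move=> x2; apply: mulr2n_inj; rewrite /= x2 mul0rn. Qed.

Lemma reflection_sqr1_idem x : (1 - x *+ 2) * (1 - x *+ 2) = 1 -> x * x = x.
Proof.
rewrite mulr_reflections -!addrA -[RHS]addr0 => /addrI.
rewrite addrA -opprD addrC => /eqP; rewrite subr_eq0 -mulrnDr => /eqP.
rewrite -[4%N]/(2 * 2)%N -[(2 + 2)%N]/(2 * 2)%N !mulrnA.
by move=> /mulr2n_inj/mulr2n_inj.
Qed.

End Reflections.

Lemma additiveB {M N : zmodType} {f : M -> N} :
  (forall u v, f (u + v) = f u + f v) -> forall u v, f (u - v) = f u - f v.
Proof.
move=> fD; have f0 : f 0 = 0 by apply: (addrI (f 0)); rewrite -fD !addr0.
have fN u : f (- u) = - f u by apply: (addrI (f u)); rewrite -fD !subrr.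
by move=> u v; rewrite fD fN.
Qed.

Lemma additiveMn {M N : zmodType} {f : M -> N} :
  (forall u v, f (u + v) = f u + f v) -> forall u n, f (u *+ n) = f u *+ n.
Proof.
move=> fD u; elim=> [|n IH]; last by rewrite !mulrS fD IH.
by rewrite !mulr0n -(subrr u) (additiveB fD) subrr.
Qed.

Section StarAlgebra.
Variable S : starAlg.
Implicit Types x y : S.

Lemma scale0 x : sa_scale 0 x = 0.
Proof. by apply: (addrI (sa_scale 0 x)); rewrite -sa_scaleDl !addr0. Qed.

Lemma scale_nat n x : sa_scale n%:R x = x *+ n.
Proof.
elim: n => [|n IH]; first by rewrite scale0 mulr0n.
by rewrite -addn1 natrD sa_scaleDl IH sa_scale1 mulrnDr.
Qed.

Lemma scale_half_mul2 x : sa_scale 2%:R^-1 (x *+ 2) = x.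
Proof. by rewrite -scale_nat sa_scaleA mulVf ?pnatr_eq0 // sa_scale1. Qed.

Lemma mul2_scale_half x : sa_scale 2%:R^-1 x *+ 2 = x.
Proof. by rewrite -scale_nat sa_scaleA mulfV ?pnatr_eq0 // sa_scale1. Qed.

Lemma starAlg_mulr2n_inj : injective (fun x : S => x *+ 2).
Proof. by move=> x y /= xy; rewrite -(scale_half_mul2 x) xy scale_half_mul2. Qed.

Lemma star1 : sa_star (1 : S) = 1.
Proof.
by rewrite -[sa_star 1]mulr1 -{2}[1](@sa_starK S) -sa_starM mulr1 sa_starK.
Qed.

Lemma star_reflection x : sa_star (1 - x *+ 2) = 1 - sa_star x *+ 2.
Proof. by rewrite (additiveB (@sa_starD S)) (additiveMn (@sa_starD S)) star1. Qed.

Lemma star_scale_half x :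
  sa_star (sa_scale 2%:R^-1 x) = sa_scale 2%:R^-1 (sa_star x).
Proof. by rewrite sa_starZ fmorphV rmorph_nat. Qed.

End StarAlgebra.

Lemma star_hom_comp (S T U : starAlg) (f : S -> T) (g : T -> U) :
  is_star_hom f -> is_star_hom g -> is_star_hom (fun x => g (f x)).
Proof.
case=> fD fZ fM f1 fS [gD gZ gM g1 gS]; split=> *.
- by rewrite fD gD.
- by rewrite fZ gZ.
- by rewrite fM gM.
- by rewrite f1 g1.
- by rewrite fS gS.
Qed.

Lemma universal_star_hom_id (I A : Type)
    (rel : forall B : starAlg, (I -> A -> B) -> Prop)
    (U : starAlg) (g : I -> A -> U) (f : U -> U) :
  is_universal rel g -> is_star_hom f -> (forall i a, f (g i a) = g i a) ->
  forall x, f x = x.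
Proof.
case=> relg univ fH fg x; have [h [_ _ h_uniq]] := univ U g relg.
by rewrite (h_uniq f fH fg) -(h_uniq id).
Qed.

Section Presentations.
Variables (I A : finType) (V : A -> A -> I -> I -> bool).
Hypothesis HV : synchronous V.

Lemma bcs_rel_reflections (S : starAlg) (p : I -> A -> S) :
  sync_rel V p -> bcs_rel V (fun i a => 1 - p i a *+ 2).
Proof.
case=> pI pS pSum pO; split=> [i a|i a|i j a b Vab|i|i a a'].
- by rewrite star_reflection pS.
- exact/reflection_sqr/pI.
- by rewrite bcs_reflections pO // mul0rn subr0 scale_half_mul2.
- rewrite prod_reflections ?index_enum_uniq // => [|a b _ _ ab]; last exact/pO/HV.
  by rewrite pSum mulr2n opprD addrA subrr sub0r.
- apply: commr_reflections; have [->|aa'] := eqVneq a a'; first exact: commr_refl.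
  by rewrite /GRing.comm !pO ?HV // eq_sym.
Qed.

Lemma sync_rel_halves (S : starAlg) (z : I -> A -> S) :
  bcs_rel V z -> sync_rel V (fun i a => sa_scale 2%:R^-1 (1 - z i a)).
Proof.
case=> zS zI zO zP _; set P := fun i a => _.
have zE i a : z i a = 1 - P i a *+ 2 by rewrite mul2_scale_half subKr.
have mul2_inj := @starAlg_mulr2n_inj S.
have PO i j a b : V a b i j = false -> P i a * P j b = 0.
  move=> /zO; rewrite (zE i a) (zE j b) bcs_reflections scale_half_mul2.
  move=> /(canRL (addKr 1)); rewrite addNr => /eqP; rewrite oppr_eq0 => /eqP.
  exact: mulr2n_eq0.
split=> [i a|i a|i|].
- by apply: reflection_sqr1_idem => //; rewrite -zE zI.
- by rewrite /P star_scale_half (additiveB (@sa_starD S)) star1 zS.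
- have := zP i; rewrite (eq_bigr _ (fun a _ => zE i a)).
  rewrite prod_reflections ?index_enum_uniq // => [|a b _ _ ab]; last exact/PO/HV.
  move=> /(canRL (subKr 1)); rewrite opprK -mulr2n => /mul2_inj; apply.
- exact: PO.
Qed.

End Presentations.

Theorem mainTheorem10 (I A : finType) (V : A -> A -> I -> I -> bool)
    (HV : synchronous V)
    (SA : starAlg) (p : I -> A -> SA) (HA : is_universal (sync_rel V) p)
    (SB : starAlg) (z : I -> A -> SB) (HB : is_universal (bcs_rel V) z) :
  exists (phi : SA -> SB) (psi : SB -> SA),
    [/\ is_star_hom phi, is_star_hom psi,
        cancel phi psi /\ cancel psi phi,
        (forall i a, phi (p i a) = sa_scale (2%:R^-1) (1 - z i a)) &
        (forall i a, psi (z i a) = 1 - p i a *+ 2)].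
Proof.
have [[relp univA] [relz univB]] := (HA, HB).
have [phi [phiH phi_p _]] := univA SB _ (sync_rel_halves HV relz).
have [psi [psiH psi_z _]] := univB SA _ (bcs_rel_reflections HV relp).
have [phiD _ _ phi1 _] := phiH; have [psiD psiZ _ psi1 _] := psiH.
exists phi, psi; split=> //; split.
- apply: (universal_star_hom_id HA (star_hom_comp phiH psiH)) => i a.
  by rewrite phi_p psiZ (additiveB psiD) psi1 psi_z subKr scale_half_mul2.
- apply: (universal_star_hom_id HB (star_hom_comp psiH phiH)) => i a.
  rewrite psi_z (additiveB phiD) (additiveMn phiD) phi1 phi_p.
  by rewrite mul2_scale_half subKr.
Qed.
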